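(* $z_2(4,3)=8$.
   Context: Double Zarankiewicz number: consider configurations $G=([m],[n],E_1\cup E_2)$ where $[m]=\{1,\dots,m\}$, $E_1\subseteq[m]\times[n]$ is a set of 1-edges (cells) and $E_2$ is a set of 2-edges $(i,j;k,l)$ with $i,k\in[m]$, $j,l\in[n]$, $i\ne k$, $j\ne l$; the cells $(i,j)$ and $(k,l)$ are the two halves of this 2-edge. Simplicity condition: the halves of all 2-edges are pairwise distinct cells and none of them belongs to $E_1$. A cell is occupied if it lies in $E_1$ or is a half of some 2-edge. $G$ contains a generalized $C_4$-cycle if (1) there are four 1-edges $(i,j),(i,l),(k,j),(k,l)\in E_1$ with $i\ne k$, $j\ne l$; or (2) there is a 2-edge $(i,j;k,l)\in E_2$ whose two opposite cells $(i,l)$ and $(k,j)$ are both occupied; or (3) there are a 2-edge $(i,j;p,q)\in E_2$ and a cell $(k,l)$ such that the five cells $(k,l),(k,j),(k,q),(i,l),(p,l)$ are pairwise distinct and all occupied. $z_2(m,n)$ is the maximum of $|E_1|+|E_2|$ over all such $G$ satisfying the simplicity condition and containing no generalized $C_4$-cycle. *)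

From mathcomp Require Import all_boot.
Set Implicit Arguments. Unset Strict Implicit. Unset Printing Implicit Defensive.

(* Cells of [m] x [n], with [m] encoded as 'I_m (row i+1 <-> ordinal i). *)
Definition cell (m n : nat) : finType := ('I_m * 'I_n)%type.

(* A 2-edge (i,j;k,l) is encoded as the ordered pair of its halves
   ((i,j),(k,l)).  A configuration is a pair (E1, E2). *)
Definition config (m n : nat) : finType :=
  ({set cell m n} * {set (cell m n * cell m n)})%type.

Section Defs.
Variables m n : nat.
Implicit Types (G : config m n) (c : cell m n) (e : cell m n * cell m n).

Definition two_edge_ok e := (e.1.1 != e.2.1) && (e.1.2 != e.2.2).

Definition is_half c e := (c == e.1) || (c == e.2).

(* Simplicity: the halves of all 2-edges are pairwise distinct cells
   (distinct 2-edges share no half; the two halves of a 2-edge differ,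
   which is automatic from two_edge_ok), and no half lies in E1. *)
Definition simple_config G :=
  [&& [forall e in G.2, two_edge_ok e],
      [forall e in G.2, forall e' in G.2,
         (e != e') ==> [forall c, ~~ (is_half c e && is_half c e')]] &
      [forall e in G.2, (e.1 \notin G.1) && (e.2 \notin G.1)]].

Definition occupied G c := (c \in G.1) || [exists e in G.2, is_half c e].

Definition cyc1 G :=
  [exists i : 'I_m, exists k : 'I_m, exists j : 'I_n, exists l : 'I_n,
     [&& i != k, j != l, (i, j) \in G.1, (i, l) \in G.1,
         (k, j) \in G.1 & (k, l) \in G.1]].

Definition cyc2 G :=
  [exists e in G.2,
     occupied G (e.1.1, e.2.2) && occupied G (e.2.1, e.1.2)].

Definition cyc3 G :=
  [exists e in G.2, exists k : 'I_m, exists l : 'I_n,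
     let i := e.1.1 in let j := e.1.2 in let p := e.2.1 in let q := e.2.2 in
     let s := [:: (k, l); (k, j); (k, q); (i, l); (p, l)] in
     uniq s && all (occupied G) s].

Definition C4_free G := ~~ [|| cyc1 G, cyc2 G | cyc3 G].

Definition admissible G := simple_config G && C4_free G.

Definition weight G := #|G.1| + #|G.2|.

End Defs.

Definition z2 (m n : nat) : nat :=
  \max_(G : config m n | admissible G) weight G.

From mathcomp Require Import all_boot zify.
Set Implicit Arguments. Unset Strict Implicit. Unset Printing Implicit Defensive.

(* A rectangle-free set of 1-edges in an m x n grid has at most m + C(n,2)
   cells: a row with d cells spans d(d-1) ordered pairs of columns, no ordered
   pair is spanned by two rows, and 2(d-1) <= d(d-1).  For 4 x 3 this gives 7,
   so a configuration of weight 9 has at least two 2-edges and its 1-edges and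
   halves occupy at least 11 of the 12 cells.  Since every 2-edge needs one of
   its two opposite cells free, exactly one cell x is free, and every half lies
   in the row or the column of x.  The 3 x 2 grid avoiding the row and column
   of x then consists of 1-edges and contains a rectangle.  The lower bound is
   an explicit configuration of weight 8. *)

Lemma card_set_pair (I J : finType) (P : I -> J -> bool) :
  #|[set p : I * J | P p.1 p.2]| = \sum_i #|[set j | P i j]|.
Proof.
rewrite -sum1_card big_mkcond /=.
transitivity (\sum_i \sum_j (if P i j then 1 else 0)).
  by rewrite pair_big /=; apply: eq_bigr => -[i j] _; rewrite inE.
apply: eq_bigr => i _; rewrite -sum1_card [RHS]big_mkcond /=.
by apply: eq_bigr => j _; rewrite inE.
Qed.

Lemma card_offdiag (T : finType) (A : {set T}) :
  #|[set p : T * T | [&& p.1 \in A, p.2 \in A & p.1 != p.2]]| = #|A| * #|A|.-1.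
Proof.
set D := [set (x, x) | x in A].
have -> : [set p : T * T | [&& p.1 \in A, p.2 \in A & p.1 != p.2]] = setX A A :\: D.
  apply/setP => -[x y]; rewrite !inE /=.
  have -> : ((x, y) \in D) = (x == y) && (x \in A).
    by apply/imsetP/andP => [[z Az [-> ->]]|[/eqP <- Ax]]; [rewrite eqxx | exists x].
  by case: eqP => [<-|_]; case: (x \in A); case: (y \in A).
rewrite cardsD cardsX (setIidPr _); last first.
  by apply/subsetP => _ /imsetP[x Ax ->]; rewrite inE /= Ax.
by rewrite card_imset => [|x y [->]]; rewrite // -subn1 mulnBr muln1.
Qed.

Lemma two_distinct_others (T : finType) (a : T) :
  2 < #|T| -> exists b c : T, [&& b != c, b != a & c != a].
Proof.
rewrite -ltn_predRL -(cardsC1 a) => /card_gt1P[b [c [+ + bc]]]; rewrite !inE => ba ca.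
by exists b, c; rewrite bc ba ca.
Qed.

Section Configurations.
Variables m n : nat.
Implicit Types (G : config m n) (c : cell m n).

Lemma rect_free_card G : ~~ cyc1 G -> #|G.1| <= m + 'C(n, 2).
Proof.
move=> no_rect.
pose row i := [set j | (i, j) \in G.1].
pose pairs := [set t : 'I_m * ('I_n * 'I_n) |
  [&& (t.1, t.2.1) \in G.1, (t.1, t.2.2) \in G.1 & t.2.1 != t.2.2]].
have card_G1 : #|G.1| = \sum_i #|row i|.
  rewrite -(card_set_pair (fun i j => (i, j) \in G.1)).
  by apply: eq_card => -[i j]; rewrite inE.
have card_pairs : #|pairs| = \sum_i #|row i| * #|row i|.-1.
  rewrite (card_set_pair (fun i p => [&& (i, p.1) \in G.1, (i, p.2) \in G.1 & p.1 != p.2])).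
  by apply: eq_bigr => i _; rewrite -card_offdiag; apply: eq_card => p; rewrite !inE.
have pairs_le : #|pairs| <= n * n.-1.
  have snd_inj : {in pairs &, injective snd}.
    move=> [i [j l]] [k [j' l']]; rewrite !inE /=.
    move=> /and3P[ij il jl] /and3P[kj kl _] [ej el]; rewrite -ej -el in kj kl *.
    case: (eqVneq i k) => [-> //|ik]; case/negP: no_rect.
    by apply/existsP; exists i; apply/existsP; exists k; apply/existsP; exists j;
       apply/existsP; exists l; rewrite ik jl ij il kj kl.
  have := card_offdiag [set: 'I_n]; rewrite cardsT card_ord => <-.
  rewrite -(card_in_imset snd_inj).
  apply: subset_leq_card; apply/subsetP => _ /imsetP[[i [j l]] + ->].
  by rewrite !inE /= => /and3P[_ _ ->].
have row_bound d : 2 * d <= 2 + d * d.-1 by case: d => [|[|d]] //=; nia.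
have : \sum_i 2 * #|row i| <= \sum_i (2 + #|row i| * #|row i|.-1).
  by apply: leq_sum => i _; apply: row_bound.
rewrite -big_distrr /= -card_G1 big_split /= sum_nat_const card_ord -card_pairs.
have := mul_bin_diag n 1; rewrite bin1.
lia.
Qed.

Definition halves G := [set e.1 | e in G.2] :|: [set e.2 | e in G.2].

Lemma occupiedE G c : occupied G c = (c \in G.1 :|: halves G).
Proof.
rewrite /occupied !inE; congr orb; apply/existsP/orP.
  by move=> [e /andP[Ge /orP[]/eqP ->]]; [left | right]; apply: imset_f.
by move=> [] /imsetP[e Ge ->]; exists e; rewrite Ge /is_half eqxx ?orbT.
Qed.

Section Simple.
Variable G : config m n.
Hypothesis simpleG : simple_config G.

Lemma simple_half_uniq e e' c :
  e \in G.2 -> e' \in G.2 -> is_half c e -> is_half c e' -> e = e'.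
Proof.
case/and3P: simpleG => _ /forall_inP disj _ Ge Ge' ce ce'.
case: (eqVneq e e') => // ee'.
move/forall_inP/(_ e' Ge')/implyP/(_ ee')/forallP/(_ c): (disj e Ge).
by rewrite ce ce'.
Qed.

Lemma card_halves : #|halves G| = 2 * #|G.2|.
Proof.
have half1 (e : cell m n * cell m n) : is_half e.1 e by rewrite /is_half eqxx.
have half2 (e : cell m n * cell m n) : is_half e.2 e by rewrite /is_half eqxx orbT.
have fst_inj : {in G.2 &, injective fst}.
  by move=> e e' Ge Ge' ee'; apply: (simple_half_uniq Ge Ge' (half1 e)); rewrite ee'.
have snd_inj : {in G.2 &, injective snd}.
  by move=> e e' Ge Ge' ee'; apply: (simple_half_uniq Ge Ge' (half2 e)); rewrite ee'.
have disj : [set e.1 | e in G.2] :&: [set e.2 | e in G.2] = set0.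
  apply/setP => c; rewrite !inE; apply/negbTE/andP.
  move=> -[/imsetP[e Ge ->] /imsetP[e' Ge' e12]].
  have ee' : e = e' by apply: (simple_half_uniq Ge Ge' (half1 e)); rewrite e12.
  case/and3P: simpleG => /forall_inP/(_ e Ge)/andP[+ _] _ _.
  by rewrite e12 ee' eqxx.
by rewrite /halves cardsU disj cards0 subn0 !card_in_imset // addnn mul2n.
Qed.

Lemma card_occupied : #|[set c | occupied G c]| = #|G.1| + 2 * #|G.2|.
Proof.
have -> : [set c | occupied G c] = G.1 :|: halves G by apply/setP => c; rewrite inE occupiedE.
have disj : G.1 :&: halves G = set0.
  apply/setP => c; rewrite !inE; apply/negbTE/andP => -[G1c].
  case/and3P: simpleG => _ _ /forall_inP out.
  case/orP => /imsetP[e /out /andP[e1 e2] ce].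
    by rewrite ce (negbTE e1) in G1c.
  by rewrite ce (negbTE e2) in G1c.
by rewrite cardsU disj cards0 subn0 card_halves.
Qed.

End Simple.

Lemma cyc2_free_opposite G e : ~~ cyc2 G -> e \in G.2 ->
  ~~ occupied G (e.1.1, e.2.2) || ~~ occupied G (e.2.1, e.1.2).
Proof.
move=> no_cyc2 Ge; rewrite -negb_and; apply: contra no_cyc2 => opp.
by apply/existsP; exists e; rewrite Ge.
Qed.

Section SingleHole.
Variables (G : config m n) (x : cell m n).
Hypotheses (no_cyc2 : ~~ cyc2 G) (hole : forall c, ~~ occupied G c -> c = x).

Lemma half_aligned_hole e c : e \in G.2 -> is_half c e -> (c.1 == x.1) || (c.2 == x.2).
Proof.
case: e => [[i j] [k l]] Ge; move: (cyc2_free_opposite no_cyc2 Ge) => /=.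
by case/orP=> /hole <-; case/orP=> /eqP -> /=; rewrite eqxx ?orbT.
Qed.

Lemma off_hole_in_E1 c : c.1 != x.1 -> c.2 != x.2 -> c \in G.1.
Proof.
move=> cx1 cx2; have : occupied G c.
  by apply/negPn/negP => /hole cx; rewrite cx eqxx in cx1.
case/orP => // /existsP[e /andP[Ge /(half_aligned_hole Ge)]].
by rewrite (negbTE cx1) (negbTE cx2).
Qed.

Lemma single_hole_cyc1 : 2 < m -> 2 < n -> cyc1 G.
Proof.
move=> m_gt2 n_gt2.
have := two_distinct_others x.1; rewrite card_ord.
move=> /(_ m_gt2)[i [k /and3P[ik ix kx]]].
have := two_distinct_others x.2; rewrite card_ord.
move=> /(_ n_gt2)[j [l /and3P[jl jx lx]]].
apply/existsP; exists i; apply/existsP; exists k.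
apply/existsP; exists j; apply/existsP; exists l.
by rewrite ik jl !off_hole_in_E1.
Qed.

End SingleHole.
End Configurations.

Lemma admissible_weight_le8 (G : config 4 3) : admissible G -> weight G <= 8.
Proof.
case/andP=> simpleG; rewrite /C4_free !negb_or => /and3P[no_cyc1 no_cyc2 _].
have E1_le7 : #|G.1| <= 7 := rect_free_card no_cyc1.
rewrite /weight; have [->|[e Ge]] := set_0Vmem G.2.
  by rewrite cards0 addn0 (leq_trans E1_le7).
set occ := [set c | occupied G c].
have occ_holes : #|occ| + #|~: occ| = 12 by rewrite cardsC card_prod !card_ord.
have some_hole : 0 < #|~: occ|.
  apply/card_gt0P; case/orP: (cyc2_free_opposite no_cyc2 Ge) => hole.
  1,2: by eexists; rewrite !inE; exact: hole.
rewrite leqNgt; apply/negP => weight_gt8.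
have /cards1P[x holesE] : #|~: occ| == 1.
  by rewrite (card_occupied simpleG) in occ_holes; lia.
have hole c : ~~ occupied G c -> c = x by move=> c_hole; apply/set1P; rewrite -holesE !inE.
by case/negP: no_cyc1; apply: single_hole_cyc1 no_cyc2 hole _ _.
Qed.

Notation c43 i j := (@Ordinal 4 i isT, @Ordinal 3 j isT).

(* Rows 0..3 of the witness, h marking the halves of its single 2-edge:
     . h 1
     h 1 1
     1 . 1
     1 1 .   *)
Definition E1_43 : seq (cell 4 3) :=
  [:: c43 0 2; c43 1 1; c43 1 2; c43 2 0; c43 2 2; c43 3 0; c43 3 1].

Definition G43 : config 4 3 := ([set c in E1_43], [set (c43 0 1, c43 1 0)]).

Lemma occupied_G43 c :
  occupied G43 c = (c \in G43.1) || (c \in [set c43 0 1; c43 1 0]).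
Proof. by rewrite occupiedE /halves /= !imset_set1 !inE. Qed.

Lemma weight_G43 : weight G43 = 8.
Proof. by rewrite /weight /= cards1 cardsE (card_uniqP (isT : uniq E1_43)). Qed.

Lemma admissible_G43 : admissible G43.
Proof.
apply/andP; split.
  apply/and3P; split.
  - by apply/forall_inP => e /set1P ->.
  - apply/forall_inP => e /set1P ->.
    by apply/forall_inP => e' /set1P ->; rewrite eqxx.
  - by apply/forall_inP => e /set1P ->; rewrite !inE.
rewrite /C4_free !negb_or; apply/and3P; split.
- apply/negP; case/existsP => i /existsP[k /existsP[j /existsP[l]]]; rewrite /= !inE.
  case: i => [[|[|[|[|i]]]] ?] //; case: k => [[|[|[|[|k]]]] ?] //;
  case: j => [[|[|[|j]]] ?] //; case: l => [[|[|[|l]]] ?] //.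
- by apply/negP; case/existsP => e /andP[/set1P -> ]; rewrite !occupied_G43 !inE.
- apply/negP; case/existsP => e /andP[/set1P -> ] /existsP[k /existsP[l]] /=.
  rewrite !occupied_G43 !inE.
  by case: k => [[|[|[|[|k]]]] ?] //; case: l => [[|[|[|l]]] ?].
Qed.

Theorem theorem2p4 : z2 4 3 = 8.
Proof.
apply/eqP; rewrite eqn_leq; apply/andP; split.
  by apply/bigmax_leqP => G; apply: admissible_weight_le8.
by rewrite -{1}weight_G43; apply: leq_bigmax_cond admissible_G43.
Qed.
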